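(* Let $G=(V,E)$ be a connected almost bipartite permutation graph that contains a hole, let $C$ be a shortest hole, $m=|C|$, $c_0,\dots,c_{m-1}$ its vertices in cyclic order (indices modulo $m$), and for each $i$ let $A_i=\{v\in V: N(v)\cap C=\{c_{i-1},c_{i+1}\}\}$ and $B_i=\{v\in V: N(v)\cap C=\{c_i\}\}$ (indices modulo $m$). For $i\in\{0,\dots,m-1\}$ define the relation $<_{A_i}$ on $A_i$ by: $u<_{A_i}u'$ iff there is $w\in B_{i-2}\cup A_{i-1}$ with $u\in N(w)$ and $u'\notin N(w)$, or there is $w\in A_{i+1}\cup B_{i+2}$ with $u'\in N(w)$ and $u\notin N(w)$. Define $<_{B_i}$ on $B_i$ by: $w<_{B_i}w'$ iff there is $u\in A_{i-2}\cup B_{i-1}$ with $w\in N(u)$ and $w'\notin N(u)$, or there is $u\in B_{i+1}\cup A_{i+2}$ with $w'\in N(u)$ and $w\notin N(u)$. Then for every $i\in\{0,\dots,m-1\}$: (1) $(A_i,<_{A_i})$ is a strict partial order, and $u,u'\in A_i$ are incomparable in it if and only if $N(u)=N(u')$; (2) $(B_i,<_{B_i})$ is a strict partial order, and $w,w'\in B_i$ are incomparable in it if and only if $N(w)=N(w')$.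
   Context: All graphs are finite, simple, undirected; $N(v)$ is the open neighborhood of $v$. A hole is an induced cycle on at least five vertices. $K_3$ is the triangle, $C_k$ the cycle on $k$ vertices. $T_2$ is the tree on 7 vertices obtained from the claw $K_{1,3}$ by subdividing each edge once. $X_2$ is the 7-vertex graph obtained from a 4-cycle by attaching one new pendant vertex to each of three of its four vertices. $X_3$ is the 7-vertex graph obtained from the domino (two 4-cycles sharing exactly one edge) by attaching one new pendant vertex to one endpoint of the shared edge. A graph is an almost bipartite permutation graph if it contains none of $T_2, X_2, X_3, K_3, C_5,\dots,C_9$ as an induced subgraph. A strict partial order is an irreflexive transitive relation. *)

(* Simple graphs: symmetric irreflexive relation e on a finType T. *)
From mathcomp Require Import all_boot.
Set Implicit Arguments. Unset Strict Implicit. Unset Printing Implicit Defensive.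

Section Defs.
Variable T : finType.
Variable e : rel T.

Definition Nbh (v : T) : {set T} := [set u | e v u].

Definition connected_graph : Prop := forall x y : T, connect e x y.

Definition induced_sub (F : finType) (eF : rel F) : Prop :=
  exists f : F -> T, injective f /\ forall x y, e (f x) (f y) = eF x y.
End Defs.

Definition mkrel (n : nat) (s : seq (nat * nat)) : rel 'I_n :=
  fun x y => (((x : nat), (y : nat)) \in s) || (((y : nat), (x : nat)) \in s).

Definition K3rel : rel 'I_3 := fun x y => x != y.
Definition Cyclerel (k : nat) : rel 'I_k :=
  fun x y => (y == (x.+1 %% k) :> nat) || (x == (y.+1 %% k) :> nat).
(* T2: claw with center 0, each edge subdivided *)
Definition T2rel : rel 'I_7 := @mkrel 7 [:: (0,1); (1,2); (0,3); (3,4); (0,5); (5,6)].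
(* X2: 4-cycle 0-1-2-3-0 with pendants 4,5,6 at 0,1,2 *)
Definition X2rel : rel 'I_7 :=
  @mkrel 7 [:: (0,1); (1,2); (2,3); (3,0); (4,0); (5,1); (6,2)].
(* X3: domino (2x3 grid 0-1-2 / 3-4-5, shared edge 1-4) plus pendant 6 at 1 *)
Definition X3rel : rel 'I_7 :=
  @mkrel 7 [:: (0,1); (1,2); (3,4); (4,5); (0,3); (1,4); (2,5); (6,1)].

Definition almost_bip_perm (T : finType) (e : rel T) : Prop :=
  ~ induced_sub e T2rel /\ ~ induced_sub e X2rel /\ ~ induced_sub e X3rel /\
  ~ induced_sub e K3rel /\
  (forall k, 5 <= k <= 9 -> ~ induced_sub e (@Cyclerel k)).

Section Hole.
Variable T : finType.
Variable e : rel T.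

Definition is_hole (m : nat) (c : nat -> T) : Prop :=
  5 <= m /\
  (forall i j, i < m -> j < m -> c i = c j -> i = j) /\
  (forall i j, i < m -> j < m ->
     e (c i) (c j) = (j == i.+1 %% m) || (i == j.+1 %% m)).

Variable m : nat.
Variable c : nat -> T.

Definition cm (i : nat) : T := c (i %% m).
Definition im (i d : nat) : nat := (i + m - d) %% m.
Definition ip (i d : nat) : nat := (i + d) %% m.

Definition Cset : {set T} := [set x | [exists k : 'I_m, x == c k]].

Definition Aset (i : nat) : {set T} :=
  [set v | Nbh e v :&: Cset == [set cm (im i 1); cm (ip i 1)]].
Definition Bset (i : nat) : {set T} :=
  [set v | Nbh e v :&: Cset == [set cm i]].

Definition ltA (i : nat) (u u' : T) : bool :=
  [exists w, (w \in Bset (im i 2) :|: Aset (im i 1)) && e w u && ~~ e w u'] ||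
  [exists w, (w \in Aset (ip i 1) :|: Bset (ip i 2)) && e w u' && ~~ e w u].
Definition ltB (i : nat) (w w' : T) : bool :=
  [exists u, (u \in Aset (im i 2) :|: Bset (im i 1)) && e u w && ~~ e u w'] ||
  [exists u, (u \in Bset (ip i 1) :|: Aset (ip i 2)) && e u w' && ~~ e u w].
End Hole.

Definition strict_po_on (T : finType) (S : {set T}) (r : rel T) : Prop :=
  (forall x, x \in S -> ~~ r x x) /\
  (forall x y z, x \in S -> y \in S -> z \in S -> r x y -> r y z -> r x z).

(* A vertex adjacent to a shortest hole C = c_0 ... c_(m-1) sees either a single vertex c_j
   of C or the two vertices c_(j-1), c_(j+1): two consecutive neighbours on C at distance 1 or
   m - 1 form a triangle, at any distance other than 2, m - 2 they close a shorter hole, and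
   three consecutive gaps of length 2 induce X_3.  Consequently a vertex separating two members
   of A_i (or of B_i) lies in one of the four layers at positions i-2, i-1, i+1, i+2 that supply
   the witnesses of the order (otherwise X_2, C_5 or T_2 appears), which makes incomparability
   equivalent to equal neighbourhoods.  Transitivity reduces to three local facts: the traces
   on A_i (on B_i) of the left witnesses are totally ordered by inclusion, so are those of the
   right witnesses, and a left and a right witness with a common neighbour in the layer
   dominate it together; a failure of any of them induces C_6 or X_3.  Finally C_5, ..., C_9
   are excluded, so m >= 10 and the hole vertices involved are distinct. *)

From mathcomp Require Import all_boot zify.
Set Implicit Arguments. Unset Strict Implicit. Unset Printing Implicit Defensive.

Lemma eqn_mod_lt2m d p q : p < d.*2 -> q < d.*2 ->
  (p == q %[mod d]) = [|| p == q, p == q + d | q == p + d].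
Proof.
have mod2 n : n < d.*2 -> n %% d = if n < d then n else n - d.
  move=> n2; case: ltnP => nd; first exact: modn_small.
  by rewrite -{1}(subnK nd) modnDr modn_small //; lia.
by move=> p2 q2; rewrite (mod2 p) // (mod2 q) //; do 2 case: ltnP => ?; lia.
Qed.

Lemma modS_congr d k l : k = l %[mod d] -> k.+1 = l.+1 %[mod d].
Proof. by move=> E; rewrite -[k.+1]addn1 -[l.+1]addn1 -modnDml E modnDml. Qed.

(** * Forbidden induced subgraphs *)

Definition twin_free (n : nat) (g : nat -> nat -> bool) : bool :=
  all (fun x => all (fun y => [|| x == y, g x y | has (fun z => g x z != g y z) (iota 0 n)])
    (iota 0 n)) (iota 0 n).

Definition pair_rel (s : seq (nat * nat)) (a b : nat) : bool := ((a, b) \in s) || ((b, a) \in s).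

Section ForbiddenSubgraphs.
Variables (T : finType) (e : rel T).
Hypotheses (e_sym : symmetric e) (e_irr : irreflexive e) (abp : almost_bip_perm e).

(* Twin-freeness of the pattern makes the embedding injective without listing
   the distinctness of the chosen vertices. *)
Lemma induced_sub_of_seq n (eF : rel 'I_n) (g : nat -> nat -> bool) (l : seq T) (v0 : T) :
  (forall x y : 'I_n, eF x y = g x y) -> twin_free n g ->
  (forall a b, a < n -> b < n -> e (nth v0 l a) (nth v0 l b) = g a b) ->
  induced_sub e eF.
Proof.
move=> eFg tf le; exists (fun x : 'I_n => nth v0 l x); split; last by move=> x y; rewrite le // eFg.
move=> x y Exy; apply/val_inj/eqP.
move/allP/(_ x): tf; rewrite mem_iota ltn_ord => /(_ isT) /allP /(_ y).
rewrite mem_iota ltn_ord => /(_ isT) /or3P [//||].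
  by rewrite -le // Exy e_irr.
by case/hasP => z; rewrite mem_iota add0n => zn; rewrite -!le // Exy eqxx.
Qed.

Ltac pattern_edges :=
  move=> [|[|[|[|[|[|[|?]]]]]]] [|[|[|[|[|[|[|?]]]]]]] //= _ _;
  first [done | by rewrite e_sym | by apply/negbTE | by rewrite e_sym; apply/negbTE
        | by rewrite e_irr].

Lemma triangle_free z x y : e z x -> e z y -> ~~ e x y.
Proof.
move=> zx zy; apply/negP => xy; case: abp => _ [_ [_ [noK3 _]]]; apply: noK3.
apply: (@induced_sub_of_seq 3 _ (fun a b => a != b) [:: x; y; z] x) => //; pattern_edges.
Qed.

Lemma no_C5 v0 v1 v2 v3 v4 :
  e v0 v1 -> ~~ e v0 v2 -> ~~ e v0 v3 -> e v0 v4 ->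
  e v1 v2 -> ~~ e v1 v3 -> ~~ e v1 v4 ->
  e v2 v3 -> ~~ e v2 v4 ->
  e v3 v4 -> False.
Proof.
move=> *; case: abp => _ [_ [_ [_ noC]]]; apply: (noC 5 isT).
by apply: (@induced_sub_of_seq 5 _ (fun a b => (b == a.+1 %% 5) || (a == b.+1 %% 5))
  [:: v0; v1; v2; v3; v4] v0) => //; pattern_edges.
Qed.

Lemma no_C6 v0 v1 v2 v3 v4 v5 :
  e v0 v1 -> ~~ e v0 v2 -> ~~ e v0 v3 -> ~~ e v0 v4 -> e v0 v5 ->
  e v1 v2 -> ~~ e v1 v3 -> ~~ e v1 v4 -> ~~ e v1 v5 ->
  e v2 v3 -> ~~ e v2 v4 -> ~~ e v2 v5 ->
  e v3 v4 -> ~~ e v3 v5 ->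
  e v4 v5 -> False.
Proof.
move=> *; case: abp => _ [_ [_ [_ noC]]]; apply: (noC 6 isT).
by apply: (@induced_sub_of_seq 6 _ (fun a b => (b == a.+1 %% 6) || (a == b.+1 %% 6))
  [:: v0; v1; v2; v3; v4; v5] v0) => //; pattern_edges.
Qed.

Lemma no_T2 v0 v1 v2 v3 v4 v5 v6 :
  e v0 v1 -> ~~ e v0 v2 -> e v0 v3 -> ~~ e v0 v4 -> e v0 v5 -> ~~ e v0 v6 ->
  e v1 v2 -> ~~ e v1 v3 -> ~~ e v1 v4 -> ~~ e v1 v5 -> ~~ e v1 v6 ->
  ~~ e v2 v3 -> ~~ e v2 v4 -> ~~ e v2 v5 -> ~~ e v2 v6 ->
  e v3 v4 -> ~~ e v3 v5 -> ~~ e v3 v6 ->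
  ~~ e v4 v5 -> ~~ e v4 v6 ->
  e v5 v6 -> False.
Proof.
move=> *; case: abp => [noT2 _]; apply: noT2.
by apply: (@induced_sub_of_seq 7 _ (pair_rel [:: (0,1); (1,2); (0,3); (3,4); (0,5); (5,6)])
  [:: v0; v1; v2; v3; v4; v5; v6] v0) => //; pattern_edges.
Qed.

Lemma no_X2 v0 v1 v2 v3 v4 v5 v6 :
  e v0 v1 -> ~~ e v0 v2 -> e v0 v3 -> e v0 v4 -> ~~ e v0 v5 -> ~~ e v0 v6 ->
  e v1 v2 -> ~~ e v1 v3 -> ~~ e v1 v4 -> e v1 v5 -> ~~ e v1 v6 ->
  e v2 v3 -> ~~ e v2 v4 -> ~~ e v2 v5 -> e v2 v6 ->
  ~~ e v3 v4 -> ~~ e v3 v5 -> ~~ e v3 v6 ->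
  ~~ e v4 v5 -> ~~ e v4 v6 ->
  ~~ e v5 v6 -> False.
Proof.
move=> *; case: abp => _ [noX2 _]; apply: noX2.
by apply: (@induced_sub_of_seq 7 _
  (pair_rel [:: (0,1); (1,2); (2,3); (3,0); (4,0); (5,1); (6,2)])
  [:: v0; v1; v2; v3; v4; v5; v6] v0) => //; pattern_edges.
Qed.

Lemma no_X3 v0 v1 v2 v3 v4 v5 v6 :
  e v0 v1 -> ~~ e v0 v2 -> e v0 v3 -> ~~ e v0 v4 -> ~~ e v0 v5 -> ~~ e v0 v6 ->
  e v1 v2 -> ~~ e v1 v3 -> e v1 v4 -> ~~ e v1 v5 -> e v1 v6 ->
  ~~ e v2 v3 -> ~~ e v2 v4 -> e v2 v5 -> ~~ e v2 v6 ->
  e v3 v4 -> ~~ e v3 v5 -> ~~ e v3 v6 ->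
  e v4 v5 -> ~~ e v4 v6 ->
  ~~ e v5 v6 -> False.
Proof.
move=> *; case: abp => _ [_ [noX3 _]]; apply: noX3.
by apply: (@induced_sub_of_seq 7 _
  (pair_rel [:: (0,1); (1,2); (3,4); (4,5); (0,3); (1,4); (2,5); (6,1)])
  [:: v0; v1; v2; v3; v4; v5; v6] v0) => //; pattern_edges.
Qed.
End ForbiddenSubgraphs.


(** * Orders defined by separating witnesses *)

Section WitnessOrder.
Variables (T : finType) (e : rel T).
Hypothesis e_sym : symmetric e.

Definition witness_rel (L R : {set T}) : rel T := fun a b =>
  [exists w, (w \in L) && e w a && ~~ e w b] || [exists w, (w \in R) && e w b && ~~ e w a].

Definition nbh_chain (W S : {set T}) : Prop := forall w w' a b,
  w \in W -> w' \in W -> a \in S -> b \in S -> e w a -> ~~ e w b -> e w' b -> ~~ e w' a -> False.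

Definition overlap_covers (L R S : {set T}) : Prop := forall w w' a b,
  w \in L -> w' \in R -> a \in S -> b \in S -> e w a -> e w' a -> e w b || e w' b.

Definition separators_within (S W : {set T}) : Prop := forall a b x,
  a \in S -> b \in S -> e a x -> ~~ e b x -> x \in W.

Lemma witness_relP (L R : {set T}) a b :
  reflect ((exists2 w, w \in L & e w a && ~~ e w b) \/ (exists2 w, w \in R & e w b && ~~ e w a))
    (witness_rel L R a b).
Proof.
apply: (iffP orP) => [[]|[]] /=.
- by case/existsP => w /andP [/andP [wL wa] wb]; left; exists w; rewrite ?wa.
- by case/existsP => w /andP [/andP [wR wb] wa]; right; exists w; rewrite ?wb.
- by case=> w wL /andP [wa wb]; left; apply/existsP; exists w; rewrite wL wa.
- by case=> w wR /andP [wb wa]; right; apply/existsP; exists w; rewrite wR wb.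
Qed.

Lemma witness_rel_strict (L R S : {set T}) :
  nbh_chain L S -> nbh_chain R S -> overlap_covers L R S -> strict_po_on S (witness_rel L R).
Proof.
move=> chL chR cov; split.
  by move=> a _; apply/witness_relP => -[] [w _]; rewrite andbN.
move=> a b d aS bS dS /witness_relP ab /witness_relP bd; apply/witness_relP.
case: ab bd => [] [w1 w1W /andP [w1x w1y]] [] [w2 w2W /andP [w2x w2y]].
- have [w1d|w1d] := boolP (e w1 d); first by case: (chL w2 w1 b d).
  by left; exists w1; rewrite ?w1x.
- have [w1d|w1d] := boolP (e w1 d); last by left; exists w1; rewrite ?w1x.
  by have := cov w1 w2 d b w1W w2W dS bS w1d w2x; rewrite (negbTE w1y) (negbTE w2y).
- have [w2a|w2a] := boolP (e w2 a); first by left; exists w2; rewrite ?w2a.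
  by have := cov w2 w1 b a w2W w1W bS aS w2x w1x; rewrite (negbTE w1y) (negbTE w2a).
- have [w2a|w2a] := boolP (e w2 a); first by case: (chR w1 w2 b a).
  by right; exists w2; rewrite ?w2x.
Qed.

Lemma witness_rel_incomparable (L R S : {set T}) :
  separators_within S (L :|: R) -> forall a b, a \in S -> b \in S ->
  (~~ witness_rel L R a b /\ ~~ witness_rel L R b a) <-> Nbh e a = Nbh e b.
Proof.
move=> sep a b aS bS; split => [[nab nba]|Nab].
  have sep_in a' b' x : a' \in S -> b' \in S -> e a' x -> ~~ e b' x ->
      witness_rel L R a' b' || witness_rel L R b' a'.
    move=> a'S b'S a'x b'x; have /setUP [xL|xR] := sep a' b' x a'S b'S a'x b'x.
      by apply/orP; left; apply/witness_relP; left; exists x; rewrite // !(e_sym x) a'x.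
    by apply/orP; right; apply/witness_relP; right; exists x; rewrite // !(e_sym x) a'x.
  apply/setP => x; rewrite !inE; apply/idP/idP => [ax|bx]; apply: contraT => nx.
    by have := sep_in a b x aS bS ax nx; rewrite (negbTE nab) (negbTE nba).
  by have := sep_in b a x bS aS bx nx; rewrite (negbTE nab) (negbTE nba).
have same w : e w a = e w b.
  have : (w \in Nbh e a) = (w \in Nbh e b) by rewrite Nab.
  by rewrite !inE !(e_sym _ w).
by split; apply/witness_relP => -[] [w _]; rewrite same andbN.
Qed.
End WitnessOrder.


(** * Neighbourhoods of a shortest hole *)

Section ShortestHole.
Variables (T : finType) (e : rel T).
Hypotheses (e_sym : symmetric e) (e_irr : irreflexive e) (abp : almost_bip_perm e).
Variables (m : nat) (c : nat -> T).
Hypothesis hole : is_hole e m c.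
Hypothesis shortest : forall (m' : nat) (c' : nat -> T), is_hole e m' c' -> m <= m'.

Local Notation cm := (cm m c).
Local Notation Aset := (Aset e m c).
Local Notation Bset := (Bset e m c).

Lemma hole_ge10 : 9 < m.
Proof.
case: hole => m5 [cinj cadj]; rewrite ltnNge; apply/negP => m9.
case: abp => _ [_ [_ [_ noC]]]; apply: (noC m); first by rewrite m5.
exists (fun x : 'I_m => c x); split; last by move=> x y; rewrite cadj.
by move=> x y /cinj E; apply/val_inj/E.
Qed.

Let m_gt0 : 0 < m. Proof. by case: hole => m5 _; lia. Qed.

Lemma cm_congr k l : k = l %[mod m] -> cm k = cm l.
Proof. by rewrite /cm => ->. Qed.

Lemma cm_inj k l : cm k = cm l -> k = l %[mod m].
Proof. by case: hole => _ [cinj _] /cinj; apply; rewrite ltn_pmod. Qed.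

Lemma cm_adj k l : e (cm k) (cm l) = (l == k.+1 %[mod m]) || (k == l.+1 %[mod m]).
Proof.
case: hole => _ [_ cadj]; rewrite /cm cadj ?ltn_pmod //.
by rewrite -[(k %% m).+1]addn1 -[(l %% m).+1]addn1 !modnDml !addn1.
Qed.

Lemma cm_addm k : cm (k + m) = cm k.
Proof. by apply: cm_congr; rewrite modnDr. Qed.

Lemma mod_offset a k : exists2 t, t < m & k = a + t %[mod m].
Proof.
exists ((k + (m - a %% m)) %% m); first by rewrite ltn_pmod.
rewrite modnDmr -modnDml (_ : a %% m + _ = k + m) ?modnDr //.
by have := ltn_pmod a m_gt0; lia.
Qed.

Lemma CsetP y : reflect (exists k, y = cm k) (y \in Cset m c).
Proof.
rewrite inE; apply: (iffP existsP) => [[k /eqP ->]|[k ->]].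
  by exists k; rewrite /cm modn_small.
by exists (Ordinal (ltn_pmod k m_gt0)).
Qed.

Lemma cm_in_Cset k : cm k \in Cset m c.
Proof. by apply/CsetP; exists k. Qed.

Lemma nbh_hole_eq (S : {set T}) x : S \subset Cset m c ->
  x \in [set v | Nbh e v :&: Cset m c == S] <-> forall k, e x (cm k) = (cm k \in S).
Proof.
move=> /subsetP SC; rewrite inE; split => [/eqP <- k|H].
  by rewrite in_setI cm_in_Cset andbT inE.
apply/eqP/setP => y; rewrite in_setI inE; case: (CsetP y) => [[k ->]|nC]; first by rewrite andbT H.
by rewrite andbF; apply/esym/negP => /SC/CsetP/nC.
Qed.

Lemma BsetP j x : x \in Bset j <-> forall k, e x (cm k) = (k == j %[mod m]).
Proof.
rewrite /Bset nbh_hole_eq ?sub1set ?cm_in_Cset //.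
have same k : (cm k \in [set cm j]) = (k == j %[mod m]).
  by rewrite inE; apply/eqP/eqP => [/cm_inj|/cm_congr].
by split=> H k; rewrite H same.
Qed.

Lemma AsetP j x : x \in Aset j <->
  forall k, e x (cm k) = (k.+1 == j %[mod m]) || (k == j.+1 %[mod m]).
Proof.
have prev k : (cm k == cm (im m j 1)) = (k.+1 == j %[mod m]).
  have -> : cm (im m j 1) = cm (j + m - 1) by apply: cm_congr; rewrite /im modn_mod.
  have jm1 : (j + m - 1).+1 = j + m by lia.
  apply/eqP/eqP => [/cm_inj Ek | Ek]; last apply: cm_congr.
    by rewrite -addn1 -modnDml Ek modnDml addn1 jm1 modnDr.
  by apply/eqP; rewrite -(eqn_modDr 1) !addn1 jm1 modnDr; apply/eqP.
have next k : (cm k == cm (ip m j 1)) = (k == j.+1 %[mod m]).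
  have -> : cm (ip m j 1) = cm j.+1 by apply: cm_congr; rewrite /ip modn_mod addn1.
  by apply/eqP/eqP => [/cm_inj|/cm_congr].
rewrite /Aset nbh_hole_eq; last by rewrite subUset !sub1set !cm_in_Cset.
by split=> H k; rewrite H !inE ?prev ?next.
Qed.

Lemma Bset_congr p q : p = q %[mod m] -> Bset p = Bset q.
Proof.
by move=> E; apply/setP => x; apply/idP/idP => /BsetP H; apply/BsetP => k; rewrite H E.
Qed.

Lemma Aset_congr p q : p = q %[mod m] -> Aset p = Aset q.
Proof.
move=> E; apply/setP => x.
by apply/idP/idP => /AsetP H; apply/AsetP => k; rewrite H E (modS_congr E).
Qed.

Lemma Bset_hole_adj a j x : x \in Bset (a + j) ->
  forall k, e x (cm (a + k)) = (k == j %[mod m]).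
Proof. by move=> /BsetP xB k; rewrite xB eqn_modDl. Qed.

Lemma Aset_hole_adj a j x : x \in Aset (a + j) ->
  forall k, e x (cm (a + k)) = (k.+1 == j %[mod m]) || (k == j.+1 %[mod m]).
Proof. by move=> /AsetP xA k; rewrite xA -!addnS !eqn_modDl. Qed.

Lemma Bset_of_offsets a x : (forall t, t < m -> e x (cm (a + t)) = (t == 0)) -> x \in Bset a.
Proof.
move=> H; apply/BsetP => k; have [t tm kt] := mod_offset a k.
have -> : a %% m = (a + 0) %% m by rewrite addn0.
by rewrite (cm_congr kt) H // kt eqn_modDl eqn_mod_lt2m; lia.
Qed.

Lemma Aset_of_offsets a x :
  (forall t, t < m -> e x (cm (a + t)) = (t == 0) || (t == 2)) -> x \in Aset (a + 1).
Proof.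
move=> H; apply/AsetP => k; have [t tm kt] := mod_offset a k.
rewrite (cm_congr kt) H // (modS_congr kt) kt -!addnS !eqn_modDl.
by case: hole => m5 _; rewrite !eqn_mod_lt2m; lia.
Qed.

Lemma window_adj a s t : s < m -> t < m -> e (cm (a + s)) (cm (a + t)) =
  [|| t == s.+1, s == t.+1, (s == 0) && (t == m.-1) | (t == 0) && (s == m.-1)].
Proof. by move=> sm tm; rewrite cm_adj -!addnS !eqn_modDl !eqn_mod_lt2m; lia. Qed.

Lemma window_adj_small a s t : s.+1 < m -> t.+1 < m ->
  e (cm (a + s)) (cm (a + t)) = (t == s.+1) || (s == t.+1).
Proof. by move=> sm tm; rewrite window_adj; lia. Qed.

Lemma window_eq a s t : s < m -> t < m -> (cm (a + s) == cm (a + t)) = (s == t).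
Proof.
move=> sm tm; apply/eqP/eqP => [/cm_inj/eqP|-> //].
by rewrite eqn_modDl eqn_mod_lt2m; lia.
Qed.

Lemma hole_le_cycle n (p : nat -> T) : 5 <= n ->
  (forall s t, s < t -> t < n -> p s != p t) ->
  (forall s t, s < t -> t < n -> e (p s) (p t) = (t == s.+1) || (s == 0) && (t == n.-1)) ->
  m <= n.
Proof.
move=> n5 pneq padj; apply: (shortest (c' := p)); split => //; split.
  move=> s t sn tn pst; case: (ltngtP s t) => // st.
    by case/eqP: (pneq _ _ st tn).
  by case/eqP: (pneq _ _ st sn).
move=> s t sn tn; have n_mod k : k < n -> k.+1 %% n = if k.+1 == n then 0 else k.+1.
  by move=> kn; case: eqP => [->|?]; [rewrite modnn | rewrite modn_small //; lia].
rewrite !n_mod //; case: (ltngtP s t) => st.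
- by rewrite padj //; do 2 case: ifP; lia.
- by rewrite e_sym padj //; do 2 case: ifP; lia.
- by subst t; rewrite e_irr; case: ifP; lia.
Qed.

(* Closing the arc c_a, ..., c_(a+g) through x (through the edge xy in [edge_detour_ge])
   gives a hole on g + 2 (g + 3) vertices. *)
Lemma vertex_detour_ge x a g : 2 < g -> g.+2 <= m ->
  e x (cm a) -> e x (cm (a + g)) -> (forall t, 0 < t < g -> ~~ e x (cm (a + t))) ->
  m <= g + 2.
Proof.
move=> g3 gm xa xg xt.
have xw s : s <= g -> e x (cm (a + s)) = (s == 0) || (s == g).
  move=> sg; case: (posnP s) => [->|s0]; first by rewrite addn0 xa.
  case: (ltngtP s g) => [lt||->]; last by rewrite xg orbT.
    by rewrite (negbTE (xt s _)); lia.
  lia.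
have x_out s : s <= g -> x != cm (a + s).
  move=> sg; apply/eqP => xs; have := xw s sg; have := xw 0 (leq0n g); have := xw g (leqnn g).
  by rewrite xs e_irr !window_adj; lia.
apply: (hole_le_cycle (p := fun t => if t <= g then cm (a + t) else x)); first lia.
- move=> s t st tn; case: ifP => sg; case: ifP => tg; try lia.
    by rewrite window_eq; lia.
  by rewrite eq_sym x_out.
- move=> s t st tn; case: ifP => sg; case: ifP => tg; try lia.
    by rewrite window_adj; lia.
  by rewrite e_sym xw; lia.
Qed.

Lemma edge_detour_ge x y a g : 1 < g -> g.+2 <= m ->
  e y (cm a) -> e x (cm (a + g)) -> e x y ->
  (forall t, 0 < t <= g -> ~~ e y (cm (a + t))) ->
  (forall t, t < g -> ~~ e x (cm (a + t))) ->
  m <= g + 3.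
Proof.
move=> g2 gm ya xg xy yt xt.
have xw s : s <= g -> e x (cm (a + s)) = (s == g).
  move=> sg; case: (ltngtP s g) => [lt||->]; last by rewrite xg.
    by rewrite (negbTE (xt s _)); lia.
  lia.
have yw s : s <= g -> e y (cm (a + s)) = (s == 0).
  move=> sg; case: (posnP s) => [->|s0]; first by rewrite addn0 ya.
  by rewrite (negbTE (yt s _)); lia.
have x_out s : s <= g -> x != cm (a + s).
  move=> sg; apply/eqP => xs; have := xw s sg; have := xw g (leqnn g); have := xw s.-1.
  by rewrite xs e_irr !window_adj; lia.
have y_out s : s <= g -> y != cm (a + s).
  move=> sg; apply/eqP => ys; have := yw s sg; have := yw 0 (leq0n g); have := yw s.+1.
  by rewrite ys e_irr !window_adj; lia.
have xy_neq : x != y by apply: contraTneq xy => ->; rewrite e_irr.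
apply: (hole_le_cycle (p := fun t => if t <= g then cm (a + t) else if t == g.+1 then x else y)).
- lia.
- move=> s t st tn; case: (leqP t g) => tg.
    by rewrite (_ : s <= g) /= ?window_eq; lia.
  case: (leqP s g) => sg /=.
    by case: ifP => _; rewrite eq_sym ?x_out ?y_out.
  by case: ifP => /eqP s1; case: ifP => /eqP t1 //; exfalso; lia.
- move=> s t st tn; case: (leqP t g) => tg.
    by rewrite (_ : s <= g) /= ?window_adj; lia.
  case: (leqP s g) => sg /=.
    by case: ifP => /eqP t1; rewrite e_sym ?xw ?yw; lia.
  case: ifP => /eqP s1; case: ifP => /eqP t1; try by exfalso; lia.
  by rewrite xy; lia.
Qed.

Ltac window := match goal with
  | |- context [e (cm _) (cm _)] =>
      by rewrite window_adj_small //; apply: leq_trans hole_ge10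
  | _ => first [done | by rewrite e_sym]
  end.

(* The first neighbour of x after c_a: distances 1 and m - 1 give a triangle, any distance
   other than 2, m - 2 and m a shorter hole. *)
Lemma hole_nbh_next x a : e x (cm a) ->
  [\/ e x (cm (a + 2)) /\ ~~ e x (cm (a + 1)),
      e x (cm (a + (m - 2))) /\ (forall t, 0 < t < m - 2 -> ~~ e x (cm (a + t)))
    | forall t, 0 < t < m -> ~~ e x (cm (a + t))].
Proof.
move=> xa; have m10 := hole_ge10; have xam : e x (cm (a + m)) by rewrite cm_addm.
have : exists g, (0 < g) && e x (cm (a + g)) by exists m; rewrite m_gt0 xam.
case/ex_minnP => g /andP [g0 xg] gmin.
have xt t : 0 < t < g -> ~~ e x (cm (a + t)).
  by case/andP=> t0 tg; apply/negP => xt; have := gmin t; rewrite t0 xt; lia.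
have gm : g <= m by apply: gmin; rewrite m_gt0 xam.
have [g2|g2] := eqVneq g 2.
  by constructor 1; split; [rewrite -g2 | apply: xt; rewrite g2].
have [gm2|gm2] := eqVneq g (m - 2).
  by constructor 2; split; [rewrite -gm2 | move=> t; rewrite -gm2; apply: xt].
have [gmm|gmm] := eqVneq g m.
  by constructor 3 => t tm; apply: xt; rewrite gmm.
exfalso; have xa0 : e x (cm (a + 0)) by rewrite addn0.
have [g1|g1] := eqVneq g 1.
  by have := triangle_free e_sym e_irr abp xa0 xg; rewrite window_adj; lia.
have [gm1|gm1] := eqVneq g m.-1.
  by have := triangle_free e_sym e_irr abp xa0 xg; rewrite window_adj; lia.
suff: m <= g + 2 by lia.
by apply: (vertex_detour_ge _ _ xa xg xt); lia.
Qed.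

(* Three consecutive gaps of length 2 would induce X_3. *)
Lemma hole_nbh_offsets x a : e x (cm a) ->
  [\/ forall t, t < m -> e x (cm (a + t)) = (t == 0),
      forall t, t < m -> e x (cm (a + t)) = (t == 0) || (t == 2)
    | forall t, t < m -> e x (cm (a + (m - 2) + t)) = (t == 0) || (t == 2)].
Proof.
move=> xa; have m10 := hole_ge10; have xa0 : e x (cm (a + 0)) by rewrite addn0.
have xaW d : d = m -> e x (cm (a + d)) by move=> ->; rewrite cm_addm.
case: (hole_nbh_next xa) => [[x2 x1]|[xm2 xt]|xt].
- case: (hole_nbh_next x2) => [[x4 x3]|[_ xt]|xt].
  + rewrite -!addnA in x4 x3; exfalso; case: (hole_nbh_next x4) => [[x6 _]|[_ xt]|xt].
    * rewrite -!addnA in x6.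
      by apply: (no_X3 e_sym e_irr abp (v0 := cm (a + 0)) (v1 := x) (v2 := cm (a + 4))
        (v3 := cm (a + 1)) (v4 := cm (a + 2)) (v5 := cm (a + 3)) (v6 := cm (a + 6))); window.
    * by have := xt (m - 4); rewrite -!addnA xaW; lia.
    * by have := xt (m - 4); rewrite -!addnA xaW; lia.
  + constructor 2 => t tm.
    have [->|t0] := posnP t; first by rewrite xa0.
    have [->|t1] := eqVneq t 1; first by rewrite (negbTE x1).
    have [->|t2] := eqVneq t 2; first by rewrite x2.
    by rewrite (_ : a + t = a + 2 + (t - 2)) ?(negbTE (xt _ _)); lia.
  + by have := xt (m - 2); rewrite -!addnA xaW; lia.
- constructor 3 => t tm; rewrite -addnA.
  have [->|t0] := posnP t; first by rewrite addn0 xm2.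
  have [->|t1] := eqVneq t 1.
    apply/negbTE/(triangle_free e_sym e_irr abp (z := cm (a + (m - 2)))); first by rewrite e_sym.
    by rewrite window_adj; lia.
  have [->|t2] := eqVneq t 2; first by rewrite xaW; lia.
  by rewrite (_ : m - 2 + t = t - 2 + m) ?addnA ?cm_addm ?(negbTE (xt _ _)); lia.
- constructor 1 => t tm; have [->|t0] := posnP t; first by rewrite xa0.
  by rewrite (negbTE (xt _ _)); lia.
Qed.

Lemma hole_nbh_shape x a : e x (cm a) ->
  [\/ x \in Bset a, x \in Aset (a + 1) | x \in Aset (a + (m - 1))].
Proof.
case/hole_nbh_offsets => H; [constructor 1 | constructor 2 | constructor 3].
- exact: Bset_of_offsets.
- exact: Aset_of_offsets.
- rewrite (_ : a + (m - 1) = a + (m - 2) + 1); first exact: Aset_of_offsets.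
  by have := hole_ge10; lia.
Qed.

(* An edge xu would close the hole u, c_(a+4), ..., c_(a-1), x on m - 2 vertices. *)
Lemma Aset_shift3_nonadj a x u : x \in Aset a -> u \in Aset (a + 3) -> ~~ e x u.
Proof.
rewrite -[a in Aset a]addn0 => /Aset_hole_adj Hx /Aset_hole_adj Hu; apply/negP => xu.
have m10 := hole_ge10.
suff: m <= (m - 5) + 3 by lia.
apply: (@edge_detour_ge x u (a + 4) (m - 5)) => //; try lia.
- by rewrite Hu !eqn_mod_lt2m; lia.
- by rewrite -addnA Hx !eqn_mod_lt2m; lia.
- by move=> t ht; rewrite -addnA Hu !eqn_mod_lt2m; lia.
- by move=> t ht; rewrite -addnA Hx !eqn_mod_lt2m; lia.
Qed.

(** * The layers around A_i and B_i *)

(* Position b stands for i - 3: [Aset (b + 3)] and [Bset (b + 3)] are A_i and B_i, and the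
   witnesses of their orders lie at positions b + 1, b + 2, b + 4, b + 5.  As m >= 10, the
   hole vertices [cm (b + k)] with k <= 6 are distinct and adjacent only for consecutive k. *)
Section Layers.
Variable b : nat.

Let m10 := hole_ge10.
Let tri := triangle_free e_sym e_irr abp.

Ltac hole_adj := match goal with
  | |- context [e (cm _) (cm _)] =>
      by rewrite window_adj_small //; apply: leq_trans m10
  | H : forall k, e ?x (cm (b + k)) = _ |- context [e ?x (cm _)] =>
      by rewrite H ?modn_small //; apply: leq_trans m10
  | H : forall k, e ?x (cm (b + k)) = _ |- context [e (cm _) ?x] =>
      by rewrite e_sym H ?modn_small //; apply: leq_trans m10
  | _ => first [done | by rewrite e_sym]
  end.

Lemma A_left_chain : nbh_chain e (Bset (b + 1) :|: Aset (b + 2)) (Aset (b + 3)).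
Proof.
move=> w w' u u' wL w'L /Aset_hole_adj Hu /Aset_hole_adj Hu' wu wu' w'u' w'u.
have uu' : ~~ e u u' by apply: (tri (z := cm (b + 2))); hole_adj.
case/setUP: wL => [/Bset_hole_adj|/Aset_hole_adj] Hw;
  case/setUP: w'L => [/Bset_hole_adj|/Aset_hole_adj] Hw';
have ww' : ~~ e w w' by apply: (tri (z := cm (b + 1))); hole_adj.
all: by apply: (no_C6 e_sym e_irr abp (v0 := u) (v1 := w) (v2 := cm (b + 1)) (v3 := w')
  (v4 := u') (v5 := cm (b + 4))); hole_adj.
Qed.

Lemma A_right_chain : nbh_chain e (Aset (b + 4) :|: Bset (b + 5)) (Aset (b + 3)).
Proof.
move=> w w' u u' wR w'R /Aset_hole_adj Hu /Aset_hole_adj Hu' wu wu' w'u' w'u.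
have uu' : ~~ e u u' by apply: (tri (z := cm (b + 2))); hole_adj.
case/setUP: wR => [/Aset_hole_adj|/Bset_hole_adj] Hw;
  case/setUP: w'R => [/Aset_hole_adj|/Bset_hole_adj] Hw';
have ww' : ~~ e w w' by apply: (tri (z := cm (b + 5))); hole_adj.
all: by apply: (no_C6 e_sym e_irr abp (v0 := u) (v1 := w) (v2 := cm (b + 5)) (v3 := w')
  (v4 := u') (v5 := cm (b + 2))); hole_adj.
Qed.

Lemma A_overlap_covers :
  overlap_covers e (Bset (b + 1) :|: Aset (b + 2)) (Aset (b + 4) :|: Bset (b + 5)) (Aset (b + 3)).
Proof.
move=> w w' u u' wL w'R /Aset_hole_adj Hu /Aset_hole_adj Hu' wu w'u.
apply/negPn/negP; rewrite negb_or => /andP [wu' w'u'].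
have uu' : ~~ e u u' by apply: (tri (z := cm (b + 2))); hole_adj.
have ww' : ~~ e w w' by apply: (tri (z := u)); hole_adj.
case/setUP: wL => [/Bset_hole_adj|/Aset_hole_adj] Hw;
  case/setUP: w'R => [/Aset_hole_adj|/Bset_hole_adj] Hw'.
all: by apply: (no_X3 e_sym e_irr abp (v0 := w) (v1 := u) (v2 := cm (b + 4)) (v3 := cm (b + 1))
  (v4 := cm (b + 2)) (v5 := u') (v6 := w')); hole_adj.
Qed.

Lemma B_left_chain : nbh_chain e (Aset (b + 1) :|: Bset (b + 2)) (Bset (b + 3)).
Proof.
move=> u u' w w' uL u'L /Bset_hole_adj Hw /Bset_hole_adj Hw' uw uw' u'w' u'w.
have ww' : ~~ e w w' by apply: (tri (z := cm (b + 3))); hole_adj.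
case/setUP: uL => [/Aset_hole_adj|/Bset_hole_adj] Hu;
  case/setUP: u'L => [/Aset_hole_adj|/Bset_hole_adj] Hu';
have uu' : ~~ e u u' by apply: (tri (z := cm (b + 2))); hole_adj.
all: by apply: (no_X3 e_sym e_irr abp (v0 := w) (v1 := cm (b + 3)) (v2 := w') (v3 := u)
  (v4 := cm (b + 2)) (v5 := u') (v6 := cm (b + 4))); hole_adj.
Qed.

Lemma B_right_chain : nbh_chain e (Bset (b + 4) :|: Aset (b + 5)) (Bset (b + 3)).
Proof.
move=> u u' w w' uR u'R /Bset_hole_adj Hw /Bset_hole_adj Hw' uw uw' u'w' u'w.
have ww' : ~~ e w w' by apply: (tri (z := cm (b + 3))); hole_adj.
case/setUP: uR => [/Bset_hole_adj|/Aset_hole_adj] Hu;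
  case/setUP: u'R => [/Bset_hole_adj|/Aset_hole_adj] Hu';
have uu' : ~~ e u u' by apply: (tri (z := cm (b + 4))); hole_adj.
all: by apply: (no_X3 e_sym e_irr abp (v0 := w) (v1 := cm (b + 3)) (v2 := w') (v3 := u)
  (v4 := cm (b + 4)) (v5 := u') (v6 := cm (b + 2))); hole_adj.
Qed.

Lemma B_overlap_covers :
  overlap_covers e (Aset (b + 1) :|: Bset (b + 2)) (Bset (b + 4) :|: Aset (b + 5)) (Bset (b + 3)).
Proof.
move=> u u' w w' uL u'R /Bset_hole_adj Hw /Bset_hole_adj Hw' uw u'w.
apply/negPn/negP; rewrite negb_or => /andP [uw' u'w'].
have ww' : ~~ e w w' by apply: (tri (z := cm (b + 3))); hole_adj.
have uu' : ~~ e u u' by apply: (tri (z := w)); hole_adj.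
case/setUP: uL => [/Aset_hole_adj|/Bset_hole_adj] Hu;
  case/setUP: u'R => [/Bset_hole_adj|/Aset_hole_adj] Hu'.
all: by apply: (no_X3 e_sym e_irr abp (v0 := cm (b + 2)) (v1 := cm (b + 3)) (v2 := cm (b + 4))
  (v3 := u) (v4 := w) (v5 := u') (v6 := w')); hole_adj.
Qed.

Lemma Aset_Bset_adj x w : x \in Aset (b + 3) -> w \in Bset (b + 3) -> e x w.
Proof.
move=> /Aset_hole_adj Hx /Bset_hole_adj Hw; apply/negPn/negP => xw.
by apply: (no_X2 e_sym e_irr abp (v0 := cm (b + 2)) (v1 := cm (b + 3)) (v2 := cm (b + 4))
  (v3 := x) (v4 := cm (b + 1)) (v5 := w) (v6 := cm (b + 5))); hole_adj.
Qed.

Lemma A_separators : separators_within e (Aset (b + 3))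
  ((Bset (b + 1) :|: Aset (b + 2)) :|: (Aset (b + 4) :|: Bset (b + 5))).
Proof.
move=> u u' x uA u'A ux u'x; have /Aset_hole_adj Hu := uA; have /Aset_hole_adj Hu' := u'A.
have x2 : ~~ e x (cm (b + 2)) by apply: (tri (z := u)); hole_adj.
have x4 : ~~ e x (cm (b + 4)) by apply: (tri (z := u)); hole_adj.
rewrite !in_setU; have [x1|x1] := boolP (e x (cm (b + 1))).
  case/hole_nbh_shape: x1 => xS; first by rewrite xS.
    by rewrite -addnA in xS; rewrite xS orbT.
  rewrite (Aset_congr (_ : b + 1 + (m - 1) = b %[mod m])) in xS.
    by case/negP: (Aset_shift3_nonadj xS uA); rewrite e_sym.
  by rewrite (_ : b + 1 + (m - 1) = b + m) ?modnDr //; lia.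
have [x5|x5] := boolP (e x (cm (b + 5))); last first.
  have uu' : ~~ e u u' by apply: (tri (z := cm (b + 2))); hole_adj.
  by case: (no_X2 e_sym e_irr abp (v0 := cm (b + 2)) (v1 := u) (v2 := cm (b + 4)) (v3 := u')
    (v4 := cm (b + 1)) (v5 := x) (v6 := cm (b + 5))); hole_adj.
case/hole_nbh_shape: x5 => xS; first by rewrite xS !orbT.
  rewrite (_ : b + 5 + 1 = b + 3 + 3) in xS; last by lia.
  by case/negP: (Aset_shift3_nonadj uA xS).
rewrite (Aset_congr (_ : b + 5 + (m - 1) = b + 4 %[mod m])) in xS; first by rewrite xS !orbT.
by rewrite (_ : b + 5 + (m - 1) = b + 4 + m) ?modnDr //; lia.
Qed.

Lemma B_separators : separators_within e (Bset (b + 3))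
  ((Aset (b + 1) :|: Bset (b + 2)) :|: (Bset (b + 4) :|: Aset (b + 5))).
Proof.
move=> w w' x /[dup] wB /Bset_hole_adj Hw w'B wx w'x.
have x3 : ~~ e x (cm (b + 3)) by apply: (tri (z := w)); hole_adj.
rewrite !in_setU; have [x2|x2] := boolP (e x (cm (b + 2))).
  case/hole_nbh_shape: x2 => xS; first by rewrite xS orbT.
    by rewrite -addnA in xS; case/negP: w'x; rewrite e_sym Aset_Bset_adj.
  rewrite (Aset_congr (_ : b + 2 + (m - 1) = b + 1 %[mod m])) in xS; first by rewrite xS.
  by rewrite (_ : b + 2 + (m - 1) = b + 1 + m) ?modnDr //; lia.
have [x4|x4] := boolP (e x (cm (b + 4))).
  case/hole_nbh_shape: x4 => xS; first by rewrite xS !orbT.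
    by rewrite -addnA in xS; rewrite xS !orbT.
  rewrite (Aset_congr (_ : b + 4 + (m - 1) = b + 3 %[mod m])) in xS.
    by case/negP: w'x; rewrite e_sym Aset_Bset_adj.
  by rewrite (_ : b + 4 + (m - 1) = b + 3 + m) ?modnDr //; lia.
have [x1|x1] := boolP (e x (cm (b + 1))).
  by case: (no_C5 e_sym e_irr abp (v0 := x) (v1 := w) (v2 := cm (b + 3)) (v3 := cm (b + 2))
    (v4 := cm (b + 1))); hole_adj.
have [x5|x5] := boolP (e x (cm (b + 5))).
  by case: (no_C5 e_sym e_irr abp (v0 := x) (v1 := w) (v2 := cm (b + 3)) (v3 := cm (b + 4))
    (v4 := cm (b + 5))); hole_adj.
by case: (no_T2 e_sym e_irr abp (v0 := cm (b + 3)) (v1 := cm (b + 2)) (v2 := cm (b + 1))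
  (v3 := cm (b + 4)) (v4 := cm (b + 5)) (v5 := w) (v6 := x)); hole_adj.
Qed.
End Layers.

Section AtIndex.
Variables (i b : nat).
Hypothesis Eb : b + 3 = i + m.

Let mod_by k l : (k == l) || (k + m == l) -> k %% m = l %[mod m].
Proof. by rewrite modn_mod; case/orP => /eqP <-; rewrite ?modnDr. Qed.

Lemma ltA_at : ltA e m c i =
  witness_rel e (Bset (b + 1) :|: Aset (b + 2)) (Aset (b + 4) :|: Bset (b + 5)).
Proof.
have m5 : 4 < m by case: hole.
by rewrite /ltA /im /ip (Bset_congr (@mod_by (i + m - 2) (b + 1) _))
  ?(Aset_congr (@mod_by (i + m - 1) (b + 2) _)) ?(Aset_congr (@mod_by (i + 1) (b + 4) _))
  ?(Bset_congr (@mod_by (i + 2) (b + 5) _)) //; lia.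
Qed.

Lemma ltB_at : ltB e m c i =
  witness_rel e (Aset (b + 1) :|: Bset (b + 2)) (Bset (b + 4) :|: Aset (b + 5)).
Proof.
have m5 : 4 < m by case: hole.
by rewrite /ltB /im /ip (Aset_congr (@mod_by (i + m - 2) (b + 1) _))
  ?(Bset_congr (@mod_by (i + m - 1) (b + 2) _)) ?(Bset_congr (@mod_by (i + 1) (b + 4) _))
  ?(Aset_congr (@mod_by (i + 2) (b + 5) _)) //; lia.
Qed.
End AtIndex.
End ShortestHole.

Theorem proposition3p7 (T : finType) (e : rel T)
  (esym : symmetric e) (eirr : irreflexive e)
  (conn : connected_graph e) (abp : almost_bip_perm e)
  (m : nat) (c : nat -> T) (hole : is_hole e m c)
  (shortest : forall (m' : nat) (c' : nat -> T), is_hole e m' c' -> m <= m')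
  (i : nat) (hi : i < m) :
  (strict_po_on (Aset e m c i) (ltA e m c i) /\
   forall u u', u \in Aset e m c i -> u' \in Aset e m c i ->
     (~~ ltA e m c i u u' /\ ~~ ltA e m c i u' u) <-> Nbh e u = Nbh e u') /\
  (strict_po_on (Bset e m c i) (ltB e m c i) /\
   forall w w', w \in Bset e m c i -> w' \in Bset e m c i ->
     (~~ ltB e m c i w w' /\ ~~ ltB e m c i w' w) <-> Nbh e w = Nbh e w').
Proof.
have [b Eb] : exists b, b + 3 = i + m by case: hole => m5 _; exists (i + m - 3); lia.
have Ei : i = b + 3 %[mod m] by rewrite Eb modnDr.
rewrite (ltA_at hole Eb) (ltB_at hole Eb) (Aset_congr hole Ei) (Bset_congr hole Ei).
split; split.
- apply: witness_rel_strict.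
  + exact: A_left_chain.
  + exact: A_right_chain.
  + exact: A_overlap_covers.
- by apply: witness_rel_incomparable; [| exact: A_separators].
- apply: witness_rel_strict.
  + exact: B_left_chain.
  + exact: B_right_chain.
  + exact: B_overlap_covers.
- by apply: witness_rel_incomparable; [| exact: B_separators].
Qed.
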